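(* Let $f\colon\mathbb{R}^m\to\mathbb{R}$ be as in the context, let $p\in\mathbb{R}^m$, and let $L\le m$ be a positive integer. Let $q_1,\dots,q_D$ be the pairwise distinct elements of $\{-\frac{2\pi}{3},0,\frac{2\pi}{3}\}^m$ having at most $L$ non-zero entries (all such elements, each listed once). Define $\tilde f\colon\mathbb{R}^m\to\mathbb{R}$ by $$\tilde f(\theta)=\sum_{j=1}^D f(p+q_j)\,\tilde K(q_j,\theta-p)\quad\text{for all }\theta\in\mathbb{R}^m.$$ Then: (i) $D=\sum_{k=0}^L 2^k\binom{m}{k}$, i.e. obtaining $\tilde f$ requires evaluating $f$ at $D=\sum_{k=0}^L2^k\binom mk$ points; (ii) if $\vartheta\in\mathbb{R}^m$ has at most $L$ non-zero entries, then $\tilde f(p+\vartheta)=f(p+\vartheta)$; (iii) $D^\alpha(f-\tilde f)(p)=0$ for all multi-indices $\alpha\in(\mathbb{Z}_{\ge0})^m$ with $|\alpha|\le L$.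
   Context: The function $f\colon\mathbb{R}^m\to\mathbb{R}$ is $f(\theta)=\langle\psi(\theta)|\mathcal{M}|\psi(\theta)\rangle$, where $\mathcal{M}\in\mathbb{C}^{2^n\times2^n}$ is Hermitian and $|\psi(\theta)\rangle=C_{m+1}R_m(\theta_m)C_m\cdots R_1(\theta_1)C_1|0\rangle^{\otimes n}$ with $C_1,\dots,C_{m+1}$ arbitrary $n$-qubit unitaries and $R_j(\theta_j)=\exp(-i\frac{\theta_j}{2}G_j)$, where each $G_j\in\mathbb{C}^{2^n\times2^n}$ is Hermitian with set of eigenvalues $\{-1,1\}$. It is known that such $f$ is of the form $f(z)=\sum_{\omega\in\{-1,0,1\}^m}c_\omega e^{i\omega^\intercal z}$ with $\overline{c_{-\omega}}=c_\omega$. $\tilde K(x,z)=\prod_{j=1}^m\frac{1+2\cos(x_j-z_j)}{3}$ for $x,z\in\mathbb{R}^m$. $D^\alpha$ denotes the partial derivative of multi-index $\alpha$, $|\alpha|=\sum_i\alpha_i$. *)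

From HB Require Import structures.
From mathcomp Require Import all_boot all_order all_algebra.
From mathcomp Require Import all_classical all_reals all_analysis.
From mathcomp Require Import complex.
Set Implicit Arguments. Unset Strict Implicit. Unset Printing Implicit Defensive.
Import Order.TTheory GRing.Theory Num.Theory.
Import numFieldNormedType.Exports.
Local Open Scope ring_scope.
Local Open Scope complex_scope.

Section Defs.
Variable R : realType.

Definition adjmx (N : nat) (A : 'M[R[i]]_N) : 'M[R[i]]_N := map_mx Num.conj A^T.
Definition hermitian_mx (N : nat) (A : 'M[R[i]]_N) : Prop := adjmx A = A.
Definition unitary_mx (N : nat) (A : 'M[R[i]]_N) : Prop := A *m adjmx A = 1%:M.

(* |0>^{(x) n} : the first computational basis vector of C^(2^n) *)
Definition ket0 (n : nat) : 'cV[R[i]]_(2 ^ n) := \col_k (k == 0 :> nat)%:R.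

(* R_j(t) = exp(-i t/2 G) for G Hermitian with eigenvalues in {-1,1}
   (so G^2 = 1), written in closed form cos(t/2) I - i sin(t/2) G. *)
Definition rotation (N : nat) (G : 'M[R[i]]_N) (t : R) : 'M[R[i]]_N :=
  ((cos (t / 2))%:C)%:M - ('i * (sin (t / 2))%:C) *: G.

(* psi(theta) = C_{m+1} R_m(theta_m) C_m ... R_1(theta_1) C_1 |0>^{(x) n}
   (0-based: C ord0 is C_1, G j is G_{j+1}, C (lift ord0 j) is C_{j+2}) *)
Definition psi (n m : nat) (C : 'I_m.+1 -> 'M[R[i]]_(2 ^ n))
  (G : 'I_m -> 'M[R[i]]_(2 ^ n)) (theta : 'rV[R]_m) : 'cV[R[i]]_(2 ^ n) :=
  foldl (fun v (j : 'I_m) => C (lift ord0 j) *m (rotation (G j) (theta 0 j) *m v))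
        (C ord0 *m ket0 n) (enum 'I_m).

(* f(theta) = <psi(theta)| M |psi(theta)>  (real since M is Hermitian) *)
Definition expval (n m : nat) (M : 'M[R[i]]_(2 ^ n)) (C : 'I_m.+1 -> 'M[R[i]]_(2 ^ n))
  (G : 'I_m -> 'M[R[i]]_(2 ^ n)) (theta : 'rV[R]_m) : R :=
  complex.Re (((map_mx Num.conj (psi C G theta))^T *m M *m psi C G theta) 0 0).

Definition Ktilde (m : nat) (x z : 'rV[R]_m) : R :=
  \prod_(j < m) ((1 + 2 * cos (x 0 j - z 0 j)) / 3).

Definition nnz (m : nat) (v : 'rV[R]_m) : nat := #|[set j : 'I_m | v 0 j != 0]|.

Definition grid_pt (m L : nat) (v : 'rV[R]_m) : Prop :=
  (forall j, v 0 j = - (2 * pi / 3) \/ v 0 j = 0 \/ v 0 j = 2 * pi / 3) /\ (nnz v <= L)%N.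

Definition partial (m : nat) (i : 'I_m) (g : 'rV[R]_m -> R) : 'rV[R]_m -> R :=
  fun x => derive g x (delta_mx 0 i).

Definition Dmulti (m : nat) (alpha : 'I_m -> nat) (g : 'rV[R]_m -> R) : 'rV[R]_m -> R :=
  foldr (fun i h => iter (alpha i) (partial i) h) g (enum 'I_m).

End Defs.

(* Along each coordinate, f is a trigonometric polynomial a + b cos t + c sin t:
   the rotation R_j(t) enters |psi> linearly through cos(t/2) and sin(t/2), hence
   f quadratically. Such a polynomial is reproduced exactly from its values at the
   three nodes 0, 2pi/3, -2pi/3 with the kernel k(u) = (1 + 2 cos u)/3, which is 1 at
   u = 0 and vanishes at u = +-2pi/3. Interpolating one coordinate after the other
   gives f(theta) = sum_q f(p + q) K(q, theta - p) exactly, q ranging over all 3^m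
   nodes, so f - f~ is the same sum restricted to the nodes with more than L nonzero
   entries. Such a node has a nonzero entry q_j at a coordinate where vartheta_j = 0
   (part ii), resp. alpha_j = 0 (part iii); there the factor k(q_j - theta_j + p_j)
   is evaluated undifferentiated at theta_j = p_j, where it equals k(q_j) = 0.
   Counting the nodes by their support gives (i). *)

From HB Require Import structures.
From mathcomp Require Import all_boot all_order all_algebra.
From mathcomp Require Import all_classical all_reals all_analysis.
From mathcomp Require Import complex.
From mathcomp Require Import ring lra.
Import Order.TTheory GRing.Theory Num.Theory.
Import numFieldNormedType.Exports.
Set Implicit Arguments. Unset Strict Implicit.
Local Open Scope ring_scope.

Section TrigDeg1.
Variable R : realType.
Implicit Types (a : R * R * R) (h : R -> R) (s t u z : R).

Definition trig1 a : R -> R := cst a.1.1 + a.1.2 *: cos + a.2 *: sin.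

Lemma trig1E a t : trig1 a t = a.1.1 + a.1.2 * cos t + a.2 * sin t.
Proof. by []. Qed.

Definition trig_deg1 h := exists a, h =1 trig1 a.

Definition trig1_deriv a : R * R * R := (0, a.2, - a.1.2).

Lemma is_derive_trig1 a t : is_derive t 1 (trig1 a) (trig1 (trig1_deriv a) t).
Proof.
have := is_deriveD (is_deriveD (is_derive_cst a.1.1 t 1) (is_deriveZ a.1.2 (is_derive_cos t)))
  (is_deriveZ a.2 (is_derive_sin t)).
by move/is_derive_eq; apply; rewrite trig1E /= add0r [in RHS]add0r addrC mulNr -mulrN.
Qed.

Lemma cos_mulr3n t : cos (t *+ 3) = 4 * cos t ^+ 3 - 3 * cos t.
Proof.
rewrite mulrSr cosD cos_mulr2n sin_mulr2n mulrnAl -mulrA -[sin t * sin t]expr2.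
by rewrite sin2cos2; ring.
Qed.

Lemma cos_pithird : cos (pi / 3) = 1 / 2 :> R.
Proof.
have pi_gt0 := pi_gt0 R.
have := cos_mulr3n (pi / 3); rewrite -[_ *+ 3]mulr_natr divfK ?pnatr_eq0 // cospi.
have : 0 < cos (pi / 3 : R) by apply: cos_gt0_pihalf; apply/andP; split; lra.
set c := cos _ => c_gt0 c3.
have : (c + 1) * (2 * c - 1) ^+ 2 = 0.
  have -> : (c + 1) * (2 * c - 1) ^+ 2 = 4 * c ^+ 3 - 3 * c + 1 by ring.
  by rewrite -c3 addNr.
by move/eqP; rewrite mulf_eq0 sqrf_eq0 => /orP[|] /eqP; lra.
Qed.

Definition third_turn : R := 2 * pi / 3.

Lemma third_turn_gt0 : 0 < third_turn.
Proof. by have := pi_gt0 R; rewrite /third_turn; lra. Qed.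

Lemma cos_third_turn : cos third_turn = - (1 / 2).
Proof.
have -> : third_turn = (pi / 3) *+ 2 by rewrite /third_turn mulr2n; lra.
by rewrite cos_mulr2n cos_pithird; lra.
Qed.

Lemma sin_third_turn_sqr : sin third_turn ^+ 2 = 3 / 4.
Proof. by rewrite sin2cos2 cos_third_turn; lra. Qed.

Definition node_angle (y : 'I_3) : R :=
  if val y == 0%N then 0 else if val y == 1%N then third_turn else - third_turn.

Definition kernel1 u : R := (1 + 2 * cos u) / 3.

Lemma kernel1_node_angle (y : 'I_3) : y != ord0 -> kernel1 (node_angle y) = 0.
Proof.
by case: y => [[|[|[|k]]] ?] // _; rewrite /kernel1 /node_angle /= ?cosN cos_third_turn; lra.
Qed.

Lemma node_angle_eq0 (y : 'I_3) : (node_angle y == 0) = (y == ord0).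
Proof.
have w_gt0 := third_turn_gt0.
by case: y => [[|[|[|k]]] ?] //; rewrite -val_eqE /node_angle /= ?eqxx ?oppr_eq0 ?gt_eqF.
Qed.

Lemma node_angle_inj : injective node_angle.
Proof.
have w_gt0 := third_turn_gt0.
case=> [[|[|[|k]]] ?] [[|[|[|l]]] ?] //; rewrite /node_angle /= => E.
all: first [exact: val_inj | exfalso; lra].
Qed.

Lemma trig1_interp a s z :
  trig1 a z = \sum_(y < 3) trig1 a (s + node_angle y) * kernel1 (node_angle y - (z - s)).
Proof.
rewrite !big_ord_recr big_ord0 /= /node_angle /= !trig1E /kernel1.
have [u ->] : exists u, z = s + u by exists (z - s); rewrite addrC subrK.
rewrite [s + u - s]addrC addKr addr0 sub0r.
rewrite add0r !cosD !sinD !cosN !sinN cos_third_turn.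
have := sin_third_turn_sqr; rewrite expr2.
move: (sin _) (cos s) (sin s) (cos u) (sin u) => S cs ss cu su S2.
apply/eqP; rewrite -subr_eq0; apply/eqP.
set d := (X in X = 0).
have -> : d = (3 / 4 - S * S) * (4 / 3 * ((a.2 * cs - a.1.2 * ss) * su)) by rewrite /d; field.
by rewrite S2 subrr mul0r.
Qed.

Lemma trig_deg1_interp h s z : trig_deg1 h ->
  h z = \sum_(y < 3) h (s + node_angle y) * kernel1 (node_angle y - (z - s)).
Proof.
move=> [a ha]; rewrite ha (trig1_interp a s).
by apply: eq_bigr => y _; rewrite ha.
Qed.

End TrigDeg1.
Arguments third_turn {R}.
Arguments node_angle {R}.

Lemma card_lt_exists_notin (T : finType) (A B : {set T}) :
  (#|A| < #|B|)%N -> exists2 j, j \in B & j \notin A.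
Proof.
move=> ltAB; have /fintype.subsetPn[j jB jA] : ~~ (B \subset A).
  by apply: contraTN ltAB => /subset_leq_card; rewrite leqNgt.
by exists j.
Qed.

Lemma card_nonzero_le_sum (m : nat) (alpha : 'I_m -> nat) :
  (#|[set j | alpha j != 0%N]| <= \sum_j alpha j)%N.
Proof.
rewrite -sum1_card [X in (_ <= X)%N](bigID (mem [set j | alpha j != 0%N])) /=.
by apply: leq_trans (leq_addr _ _); apply: leq_sum => j; rewrite inE lt0n.
Qed.

Section GridIndices.
Variable m : nat.
Local Notation grid := {ffun 'I_m -> 'I_3}.
Implicit Types (e : grid) (S : {set 'I_m}).

Definition supp e : {set 'I_m} := [set j | e j != ord0].

Definition ffun_set e (j : 'I_m) (y : 'I_3) : grid := [ffun k => if k == j then y else e k].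

Lemma ffun_setE e j y : ffun_set e j y j = y.
Proof. by rewrite ffunE eqxx. Qed.

Lemma ffun_setK e j y z : ffun_set (ffun_set e j y) j z = ffun_set e j z.
Proof. by apply/ffunP => k; rewrite !ffunE; case: eqP. Qed.

Lemma ffun_set_id e j z : (ffun_set e j z == e) = (e j == z).
Proof.
apply/eqP/eqP => [<-|ej]; first exact: ffun_setE.
by apply/ffunP => k; rewrite ffunE; case: eqP => [->|].
Qed.

Lemma supp_ffun_set_sub e j y S : j \notin S ->
  (supp (ffun_set e j y) \subset j |: S) && (ffun_set e j y j == y) &&
    (ffun_set (ffun_set e j y) j ord0 == e) = (supp e \subset S).
Proof.
move=> jS; rewrite ffun_setE eqxx andbT ffun_setK ffun_set_id.
apply/andP/fintype.subsetP => [[/fintype.subsetP sub /eqP ej] k|sub].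
  rewrite inE => ek; have kj : k != j by apply: contraNneq ek => ->; rewrite ej.
  by move: (sub k); rewrite !inE ffunE (negbTE kj) => /(_ ek).
split.
  apply/fintype.subsetP => k; rewrite !inE ffunE.
  by case: (k =P j) => //= _ ek; apply: sub; rewrite inE.
by apply: contraNT jS => ej; apply: sub; rewrite inE.
Qed.

Lemma card_supp_eq (S : {set 'I_m}) : #|[set e : grid | supp e == S]| = (2 ^ #|S|)%N.
Proof.
have -> : #|[set e : grid | supp e == S]| = #|pffun_on ord0 S [set y : 'I_3 | y != ord0]|.
  apply: eq_card => e; rewrite inE; apply/eqP/pfamilyP => [<-|[/fintype.subsetP eS eT]].
    by split; [apply/fintype.subsetP => x | move=> x]; rewrite !inE.
  apply/setP => x; rewrite inE; apply/idP/idP => [ex|xS]; first by apply: eS; rewrite inE.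
  by have := eT x xS; rewrite inE.
rewrite card_pffun_on; congr (_ ^ _)%N.
have -> : [set y : 'I_3 | y != ord0] = [set~ ord0] by apply/setP => y; rewrite !inE.
by rewrite cardsC1 card_ord.
Qed.

Lemma card_supp_le (L : nat) :
  #|[set e : grid | (#|supp e| <= L)%N]| = (\sum_(k < L.+1) 2 ^ k * 'C(m, k))%N.
Proof.
rewrite -sum1_card (partition_big supp (fun S => #|S| <= L)%N) => [|e]; last by rewrite inE.
rewrite (eq_bigr (fun S : {set 'I_m} => 2 ^ #|S|)%N) => [|S leSL]; last first.
  rewrite -card_supp_eq -sum1_card; apply: eq_bigl => e.
  by rewrite !inE; case: eqP => [->|]; rewrite ?leSL ?andbF.
rewrite (partition_big (fun S : {set 'I_m} => inord #|S| : 'I_L.+1) xpredT) //=.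
apply: eq_bigr => k _.
rewrite (eq_bigl (fun S => S \in [set S : {set 'I_m} | #|S| == k])) => [|S]; last first.
  rewrite inE; apply/andP/eqP => [[leSL /eqP <-]|cardS]; first by rewrite inordK.
  by rewrite cardS -ltnS ltn_ord; split=> //; apply/eqP/val_inj; rewrite /= inordK ?cardS.
rewrite (eq_bigr (fun _ => 2 ^ k)%N) => [|S]; last by rewrite inE => /eqP ->.
by rewrite sum_nat_const card_draws card_ord mulnC.
Qed.

End GridIndices.
Arguments supp {m}.

Section TensorInterpolation.
Variables (R : realType) (m : nat) (p : 'rV[R]_m).
Local Notation grid := {ffun 'I_m -> 'I_3}.
Implicit Types (theta : 'rV[R]_m) (g : 'rV[R]_m -> R) (e : grid) (S : {set 'I_m}).

Definition set_coord theta (j : 'I_m) (t : R) : 'rV[R]_m :=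
  \row_k (if k == j then t else theta 0 k).

Lemma set_coord_eq theta j t : set_coord theta j t 0 j = t.
Proof. by rewrite mxE eqxx. Qed.

Lemma set_coord_neq theta j t k : k != j -> set_coord theta j t 0 k = theta 0 k.
Proof. by rewrite mxE => /negbTE ->. Qed.

Lemma set_coord_id theta j : set_coord theta j (theta 0 j) = theta.
Proof. by apply/rowP => k; rewrite mxE; case: eqP => // ->. Qed.

Definition coordwise_trig_deg1 g := forall theta j, trig_deg1 (fun t => g (set_coord theta j t)).

Definition grid_node e : 'rV[R]_m := \row_j node_angle (e j).

Definition grid_mix theta S e : 'rV[R]_m :=
  \row_j (if j \in S then p 0 j + node_angle (e j) else theta 0 j).

Definition grid_weight theta S e : R :=
  \prod_(j in S) kernel1 (node_angle (e j) - (theta 0 j - p 0 j)).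

Lemma interp_step g S j theta : coordwise_trig_deg1 g -> j \notin S ->
  \sum_(e | supp e \subset S) g (grid_mix theta S e) * grid_weight theta S e =
  \sum_(e | supp e \subset j |: S) g (grid_mix theta (j |: S) e) * grid_weight theta (j |: S) e.
Proof.
move=> g_trig jS.
pose k y := kernel1 (node_angle y - (theta 0 j - p 0 j)).
have mixE e : g (grid_mix theta S e) =
    \sum_(y < 3) g (grid_mix theta (j |: S) (ffun_set e j y)) * k y.
  rewrite -{1}[grid_mix theta S e](set_coord_id _ j) (trig_deg1_interp (p 0 j) _ (g_trig _ j)).
  apply: eq_bigr => y _; rewrite /k mxE (negbTE jS); congr (g _ * _).
  apply/rowP => i; rewrite !mxE ffunE in_setU1.
  by case: eqP => [->|] //=; rewrite addrC.
have weightE e y : grid_weight theta (j |: S) (ffun_set e j y) = k y * grid_weight theta S e.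
  rewrite /grid_weight big_setU1 //= ffunE eqxx; congr (_ * _).
  by apply: eq_bigr => i iS; rewrite ffunE; case: eqP => // ij; rewrite -ij iS in jS.
under eq_bigr do rewrite mixE big_distrl.
rewrite exchange_big [RHS](partition_big (fun e => e j) xpredT) //=.
apply: eq_bigr => y _.
rewrite [RHS](reindex_onto (fun e => ffun_set e j y) (fun e => ffun_set e j ord0)); last first.
  by move=> e /andP[_ /eqP <-]; apply/ffunP => i; rewrite !ffunE; case: eqP => [->|].
apply: eq_big => [e|e _]; first by rewrite supp_ffun_set_sub.
by rewrite weightE mulrA.
Qed.

Lemma interp_subset g S theta : coordwise_trig_deg1 g ->
  g theta = \sum_(e | supp e \subset S) g (grid_mix theta S e) * grid_weight theta S e.
Proof.
move=> g_trig; move: {2}#|S| (erefl #|S|) => n; elim: n S => [|n IH] S cardS.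
  rewrite (cards0_eq cardS).
  rewrite (big_pred1 [ffun => ord0]) => [|e]; last first.
    rewrite finset.subset0; apply/eqP/eqP => [e0|->]; last by apply/setP => j; rewrite !inE ffunE.
    apply/ffunP => j; have : j \notin supp e by rewrite e0 inE.
    by rewrite inE negbK ffunE => /eqP.
  rewrite /grid_weight big_set0 mulr1; congr g.
  by apply/rowP => j; rewrite mxE inE.
have [j jS] : {j | j \in S} by apply/sigW/set0Pn; rewrite -card_gt0 cardS.
rewrite -(finset.setD1K jS) -interp_step ?setD11 //; apply: IH.
by rewrite (cardsD1 j S) jS in cardS; case: cardS.
Qed.

Lemma tensor_interp g theta : coordwise_trig_deg1 g ->
  g theta = \sum_e g (p + grid_node e) * Ktilde (grid_node e) (theta - p).
Proof.
move=> g_trig; rewrite (interp_subset [set: 'I_m] theta g_trig).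
apply: eq_big => [e|e _]; first by rewrite finset.subsetT.
congr (g _ * _); first by apply/rowP => j; rewrite !mxE inE.
by rewrite /grid_weight /Ktilde; apply: eq_big => [j|j _]; rewrite ?inE // !mxE.
Qed.

End TensorInterpolation.
Arguments grid_node {R m}.

Local Open Scope complex_scope.

Lemma conj_complex_real (R : realType) (r : R) : Num.conj (r%:C : R[i]) = r%:C.
Proof. exact: conjc_real. Qed.

Section HalfAngleForm.
Variables (R : realType) (N : nat) (M : 'M[R[i]]_N).
Implicit Types (x y : 'cV[R[i]]_N).

Definition sesq x y : R[i] := ((map_mx Num.conj x)^T *m M *m y) 0 0.

Definition half_angle_comb x y (t : R) : 'cV[R[i]]_N := (cos (t / 2))%:C *: x + (sin (t / 2))%:C *: y.

Lemma sesqE x y : sesq x y = \sum_k \sum_l Num.conj (x l 0) * M l k * y k 0.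
Proof.
rewrite /sesq mxE; apply: eq_bigr => k _; rewrite mxE big_distrl /=.
by apply: eq_bigr => l _; rewrite !mxE.
Qed.

Lemma sesq_comb (a b : R[i]) x y :
  sesq (a *: x + b *: y) (a *: x + b *: y) =
  a^* * a * sesq x x + a^* * b * sesq x y + b^* * a * sesq y x + b^* * b * sesq y y.
Proof.
rewrite !sesqE !mulr_sumr -!big_split /=; apply: eq_bigr => k _.
rewrite !mulr_sumr -!big_split /=; apply: eq_bigr => l _.
rewrite !mxE (rmorphD Num.conj) !(rmorphM Num.conj).
(* [ring] needs the atoms [Num.conj a] and [a^*] (that is, [conjc a]) to coincide syntactically. *)
by change (Num.conj a) with a^*; change (Num.conj b) with b^*; ring.
Qed.

Lemma Re_sesq_real_comb (c s : R) x y :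
  complex.Re (sesq (c%:C *: x + s%:C *: y) (c%:C *: x + s%:C *: y)) =
  c ^+ 2 * complex.Re (sesq x x) + c * s * complex.Re (sesq x y + sesq y x)
    + s ^+ 2 * complex.Re (sesq y y).
Proof.
rewrite sesq_comb !conj_complex_real.
by case: (sesq x x) (sesq x y) (sesq y x) (sesq y y) => ? ? [? ?] [? ?] [? ?] /=; ring.
Qed.

Lemma trig_deg1_half_angle x y :
  trig_deg1 (fun t => complex.Re (sesq (half_angle_comb x y t) (half_angle_comb x y t))).
Proof.
pose A := complex.Re (sesq x x); pose B := complex.Re (sesq y y).
pose X := complex.Re (sesq x y + sesq y x).
exists ((A + B) / 2, (A - B) / 2, X / 2) => t.
rewrite Re_sesq_real_comb -/A -/B -/X trig1E /=.
rewrite [in cos t](splitr t) [in sin t](splitr t) cosD sinD; have := cos2Dsin2 (t / 2).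
move: (cos _) (sin _) => c s cs1; clearbody A B X.
have -> : (A + B) / 2 = (A + B) / 2 * (c ^+ 2 + s ^+ 2) by rewrite cs1 mulr1.
by field.
Qed.

End HalfAngleForm.

Lemma foldl_mulmx (K : pzRingType) (N : nat) (I : Type) (F : I -> 'M[K]_N) s (k : nat)
    (A : 'M[K]_(N, k)) :
  foldl (fun B i => F i *m B) A s = foldl (fun B i => F i *m B) 1%:M s *m A.
Proof.
elim: s k A => [|i s IH] k A /=; first by rewrite mul1mx.
by rewrite IH [in RHS]IH mulmx1 mulmxA.
Qed.

Lemma eq_foldl_in (T : Type) (I : eqType) (f g : T -> I -> T) s x :
  {in s, forall i y, f y i = g y i} -> foldl f x s = foldl g x s.
Proof.
elim: s x => [|i s IH] x //= fg; rewrite fg ?mem_head // IH // => k ks.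
by apply: fg; rewrite inE ks orbT.
Qed.

Lemma rotation_mulmx (R : realType) (N k : nat) (Gm : 'M[R[i]]_N) t
    (P : 'M[R[i]]_(k, N)) (u : 'cV[R[i]]_N) :
  P *m (rotation Gm t *m u) = half_angle_comb (P *m u) (- ('i *: (P *m (Gm *m u)))) t.
Proof.
rewrite /half_angle_comb /rotation mulmxBl mul_scalar_mx -scalemxAl mulmxBr -!scalemxAr.
by rewrite scalerN scalerA [(sin _)%:C * _]mulrC.
Qed.

Section Circuit.
Variables (R : realType) (n m : nat).
Variables (C : 'I_m.+1 -> 'M[R[i]]_(2 ^ n)) (G : 'I_m -> 'M[R[i]]_(2 ^ n)).
Implicit Types (theta : 'rV[R]_m).

Definition layer theta (i : 'I_m) : 'M[R[i]]_(2 ^ n) :=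
  C (lift ord0 i) *m rotation (G i) (theta 0 i).

Definition layers theta s k (A : 'M[R[i]]_(2 ^ n, k)) : 'M[R[i]]_(2 ^ n, k) :=
  foldl (fun B i => layer theta i *m B) A s.

Lemma psiE theta : psi C G theta = layers theta (enum 'I_m) (C ord0 *m ket0 R n).
Proof.
rewrite /psi /layers.
by elim: (enum 'I_m) (C ord0 *m ket0 R n) => //= i s IH v; rewrite IH mulmxA.
Qed.

Lemma layers_cat theta s1 s2 k (A : 'M[R[i]]_(2 ^ n, k)) :
  layers theta (s1 ++ s2) A = layers theta s2 (layers theta s1 A).
Proof. exact: foldl_cat. Qed.

Lemma layers_cons theta i s k (A : 'M[R[i]]_(2 ^ n, k)) :
  layers theta (i :: s) A = layers theta s (layer theta i *m A).
Proof. by []. Qed.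

Lemma layers_mulmx theta s k (A : 'M[R[i]]_(2 ^ n, k)) : layers theta s A = layers theta s 1%:M *m A.
Proof. exact: foldl_mulmx. Qed.

Lemma layers_set_coord_notin theta j t s k (A : 'M[R[i]]_(2 ^ n, k)) : j \notin s ->
  layers (set_coord theta j t) s A = layers theta s A.
Proof.
move=> js; apply: eq_foldl_in => i si B; rewrite /layer set_coord_neq //.
by apply: contraNneq js => <-.
Qed.

Lemma psi_set_coord theta j : exists P u, forall t,
  psi C G (set_coord theta j t) = P *m (rotation (G j) t *m u).
Proof.
suff [P [u layersE]] : exists P u, forall t,
    layers (set_coord theta j t) (enum 'I_m) (C ord0 *m ket0 R n) = P *m (rotation (G j) t *m u).
  by exists P, u => t; rewrite psiE layersE.
have := enum_uniq 'I_m; have := mem_enum 'I_m j; rewrite inE.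
case/splitPr=> s1 s2; rewrite cat_uniq [has _ _]/= cons_uniq => /and3P[_ /norP[js1 _] /andP[js2 _]].
exists (layers theta s2 1%:M *m C (lift ord0 j)), (layers theta s1 (C ord0 *m ket0 R n)) => t.
rewrite layers_cat layers_cons !layers_set_coord_notin // [LHS]layers_mulmx.
by rewrite /layer set_coord_eq !mulmxA.
Qed.

Lemma expval_coordwise_trig_deg1 (M : 'M[R[i]]_(2 ^ n)) : coordwise_trig_deg1 (expval M C G).
Proof.
move=> theta j; have [P [u psiE]] := psi_set_coord theta j.
set y := - ('i *: (P *m (G j *m u))).
have -> : (fun t => expval M C G (set_coord theta j t)) =
    fun t => complex.Re (sesq M (half_angle_comb (P *m u) y t) (half_angle_comb (P *m u) y t)).
  by apply/funext => t; rewrite /expval psiE rotation_mulmx.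
exact: trig_deg1_half_angle.
Qed.

End Circuit.

Lemma is_derive_line (R : realType) (V W : normedModType R) (F : V -> W) (g : R -> W)
    (x v : V) (a : R) (dg : W) :
  (forall h, F (h *: v + x) = g (h + a)) -> is_derive a 1 g dg -> is_derive x v F dg.
Proof.
move=> Fg [dg_ex dgE].
have Fx : F x = g a by have := Fg 0; rewrite scale0r !add0r.
have quotE : (fun h : R => h^-1 *: ((F \o shift x) (h *: v) - F x)) =
             (fun h : R => h^-1 *: ((g \o shift a) (h *: 1) - g a)).
  by apply/funext => h /=; rewrite /shift Fg Fx [h *: 1]mulr1.
by split; rewrite /derivable /derive quotE.
Qed.

Lemma is_derive_sum_seq (R : realType) (V W : normedModType R) (I : Type) (r : seq I)
    (P : pred I) (F : I -> V -> W) (dF : I -> W) (x v : V) :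
  (forall i, P i -> is_derive x v (F i) (dF i)) ->
  is_derive x v (\sum_(i <- r | P i) F i) (\sum_(i <- r | P i) dF i).
Proof.
move=> dFi; elim/big_rec2: _ => [|i dy y Pi dy_y]; first exact: is_derive_cst.
exact: is_deriveD (dFi _ Pi) dy_y.
Qed.

Section TrigProducts.
Variables (R : realType) (m : nat).
Implicit Types (T : 'I_m -> R * R * R) (theta : 'rV[R]_m) (i j : 'I_m).

Definition prod_trig T theta : R := \prod_j trig1 (T j) (theta 0 j).

Definition deriv_coord i T : 'I_m -> R * R * R :=
  fun j => if j == i then trig1_deriv (T j) else T j.

Lemma prod_trig_line T theta i h :
  prod_trig T (h *: delta_mx 0 i + theta) =
  (\prod_(j | j != i) trig1 (T j) (theta 0 j)) * trig1 (T i) (h + theta 0 i).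
Proof.
rewrite /prod_trig (bigD1 i) //= mulrC; congr (_ * trig1 _ _).
  by apply: eq_bigr => j ji; rewrite !mxE (negbTE ji) mulr0 add0r.
by rewrite !mxE !eqxx /= ?mulr1n mulr1.
Qed.

Lemma is_derive_prod_trig T theta i :
  is_derive theta (delta_mx 0 i) (prod_trig T) (prod_trig (deriv_coord i T) theta).
Proof.
pose c := \prod_(j | j != i) trig1 (T j) (theta 0 j).
apply: (@is_derive_line _ _ _ _ (c *: trig1 (T i)) _ _ (theta 0 i)).
  by move=> h; rewrite prod_trig_line.
have -> : prod_trig (deriv_coord i T) theta = c *: trig1 (trig1_deriv (T i)) (theta 0 i).
  rewrite /prod_trig (bigD1 i) //= /deriv_coord eqxx mulrC; congr (_ * _).
  by apply: eq_bigr => j ji; rewrite (negbTE ji).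
exact: is_deriveZ (is_derive_trig1 _ _).
Qed.

Definition trig_comb (I : finType) (P : pred I) (c : I -> R) (T : I -> 'I_m -> R * R * R) :
    'rV[R]_m -> R :=
  \sum_(e | P e) c e \*: prod_trig (T e).

Lemma trig_combE (I : finType) (P : pred I) c (Ts : I -> 'I_m -> R * R * R) theta :
  trig_comb P c Ts theta = \sum_(e | P e) c e * prod_trig (Ts e) theta.
Proof. by rewrite /trig_comb fct_sumE. Qed.

Lemma partial_trig_comb (I : finType) i (P : pred I) c (Ts : I -> 'I_m -> R * R * R) :
  partial i (trig_comb P c Ts) = trig_comb P c (fun e => deriv_coord i (Ts e)).
Proof.
apply/funext => theta; rewrite /partial trig_combE.
have [_ ->] := is_derive_sum_seq (index_enum I) (fun e (_ : P e) =>
  is_deriveZ (c e) (is_derive_prod_trig (Ts e) theta i)).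
by apply: eq_bigr.
Qed.

Definition deriv_multi (alpha : 'I_m -> nat) T : 'I_m -> R * R * R :=
  foldr (fun i T' => iter (alpha i) (deriv_coord i) T') T (enum 'I_m).

Lemma Dmulti_trig_comb (I : finType) alpha (P : pred I) c (Ts : I -> 'I_m -> R * R * R) :
  Dmulti alpha (trig_comb P c Ts) = trig_comb P c (fun e => deriv_multi alpha (Ts e)).
Proof.
rewrite /Dmulti /deriv_multi; elim: (enum 'I_m) => //= i s ->.
by elim: (alpha i) => //= k ->; rewrite partial_trig_comb.
Qed.

Lemma deriv_multi_id alpha T j : alpha j = 0%N -> deriv_multi alpha T j = T j.
Proof.
move=> alpha_j; rewrite /deriv_multi; elim: (enum 'I_m) => //= i s <-.
have [->|ij] := eqVneq i j; first by rewrite alpha_j.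
by elim: (alpha i) => //= k IH; rewrite {1}/deriv_coord eq_sym (negbTE ij).
Qed.

End TrigProducts.

Section GridCoding.
Variables (R : realType) (m : nat).
Local Notation grid := {ffun 'I_m -> 'I_3}.

Definition grid_code (v : 'rV[R]_m) : grid :=
  [ffun j => odflt ord0 [pick y | node_angle y == v 0 j]].

Lemma grid_code_node (e : grid) : grid_code (grid_node e) = e.
Proof.
apply/ffunP => j; rewrite ffunE mxE.
by case: pickP => [y /eqP/node_angle_inj //|/(_ (e j))]; rewrite eqxx.
Qed.

Lemma grid_node_code (v : 'rV[R]_m) :
  (forall j, v 0 j = - (2 * pi / 3) \/ v 0 j = 0 \/ v 0 j = 2 * pi / 3) ->
  grid_node (grid_code v) = v.
Proof.
move=> vE; apply/rowP => j; rewrite !mxE ffunE.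
case: pickP => [y /eqP //|none]; exfalso.
have [y yE] : exists y : 'I_3, node_angle y = v 0 j.
  case: (vE j) => [|[|]] ->; [exists (Ordinal (isT : 2 < 3)%N) | exists ord0 | exists (Ordinal (isT : 1 < 3)%N)] => //.
by have := none y; rewrite yE eqxx.
Qed.

Lemma nnz_grid_node (e : grid) : nnz (grid_node e : 'rV[R]_m) = #|supp e|.
Proof. by apply: eq_card => j; rewrite !inE mxE node_angle_eq0. Qed.

Lemma grid_pt_node L (e : grid) : (#|supp e| <= L)%N -> grid_pt L (grid_node e : 'rV[R]_m).
Proof.
move=> suppL; split; last by rewrite nnz_grid_node.
by move=> j; rewrite mxE /node_angle; case: (e j) => [[|[|[|k]]] ?] /=; auto.
Qed.

End GridCoding.

Section GridEnumeration.
Variables (R : realType) (m L D : nat) (q : 'I_D -> 'rV[R]_m).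
Hypotheses (q_inj : injective q) (q_grid : forall j, grid_pt L (q j))
  (q_onto : forall v, grid_pt L v -> exists j, q j = v).
Local Notation grid := {ffun 'I_m -> 'I_3}.

Let q_code j : grid_node (grid_code (q j)) = q j.
Proof. by apply: grid_node_code; case: (q_grid j). Qed.

Let code_inj : injective (fun j => grid_code (q j)).
Proof. by move=> j k /(congr1 (@grid_node R m)); rewrite !q_code => /q_inj. Qed.

Let code_image : [set grid_code (q j) | j in 'I_D] = [set e : grid | (#|supp e| <= L)%N].
Proof.
apply/setP => e; rewrite inE; apply/imsetP/idP => [[j _ ->]|suppL].
  by rewrite -(nnz_grid_node R) q_code; case: (q_grid j).
have [j qj] := q_onto (grid_pt_node R suppL).
by exists j; rewrite // qj grid_code_node.
Qed.

Lemma card_grid_enum : D = (\sum_(k < L.+1) 2 ^ k * 'C(m, k))%N.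
Proof.
by rewrite -card_supp_le -code_image card_imset // card_ord.
Qed.

Lemma sum_grid_enum (F : 'rV[R]_m -> R) :
  \sum_(j < D) F (q j) = \sum_(e : grid | (#|supp e| <= L)%N) F (grid_node e).
Proof.
transitivity (\sum_(e in [set e : grid | (#|supp e| <= L)%N]) F (grid_node e)).
  rewrite -code_image big_imset /=; last by move=> j k _ _ /code_inj.
  by apply: eq_bigr => j _; rewrite q_code.
by apply: eq_bigl => e; rewrite inE.
Qed.

End GridEnumeration.

Section KernelCoefficients.
Variable R : realType.

Definition kernel_coef (u s : R) : R * R * R := (1 / 3, 2 / 3 * cos (u + s), 2 / 3 * sin (u + s)).

Lemma trig1_kernel_coef u s t : trig1 (kernel_coef u s) t = kernel1 (u - (t - s)).
Proof.
have -> : u - (t - s) = (u + s) - t by ring.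
by rewrite trig1E /kernel1 cosB /=; field.
Qed.

Lemma Ktilde_prod_trig m (x p theta : 'rV[R]_m) :
  Ktilde x (theta - p) = prod_trig (fun j => kernel_coef (x 0 j) (p 0 j)) theta.
Proof. by apply: eq_bigr => j _; rewrite trig1_kernel_coef !mxE. Qed.

End KernelCoefficients.

Section Surrogate.
Variables (R : realType) (m L : nat) (p : 'rV[R]_m) (g : 'rV[R]_m -> R).
Hypothesis g_trig : coordwise_trig_deg1 g.
Local Notation grid := {ffun 'I_m -> 'I_3}.

Definition surrogate theta : R :=
  \sum_(e : grid | (#|supp e| <= L)%N) g (p + grid_node e) * Ktilde (grid_node e) (theta - p).

Lemma sub_surrogate theta : g theta - surrogate theta =
  \sum_(e : grid | (L < #|supp e|)%N) g (p + grid_node e) * Ktilde (grid_node e) (theta - p).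
Proof.
rewrite {1}(tensor_interp p theta g_trig) (bigID (fun e : grid => #|supp e| <= L)%N) /=.
by rewrite addrC addrK; apply: eq_bigl => e; rewrite ltnNge.
Qed.

Lemma Ktilde_grid_node_eq0 (e : grid) (z : 'rV[R]_m) j :
  j \in supp e -> z 0 j = 0 -> Ktilde (grid_node e) z = 0.
Proof.
rewrite inE => ej zj; rewrite /Ktilde (bigD1 j) //= !mxE zj subr0.
by have := kernel1_node_angle R ej; rewrite /kernel1 => ->; rewrite mul0r.
Qed.

Lemma surrogate_sparse vt : (nnz vt <= L)%N -> surrogate (p + vt) = g (p + vt).
Proof.
move=> vtL; apply/eqP; rewrite eq_sym -subr_eq0 sub_surrogate; apply/eqP/big1 => e Le.
have [j ej vj] := card_lt_exists_notin (leq_ltn_trans vtL Le).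
rewrite addrAC subrr add0r (Ktilde_grid_node_eq0 ej) ?mulr0 //.
by apply/eqP; move: vj; rewrite inE negbK.
Qed.

Lemma Dmulti_sub_surrogate alpha :
  (\sum_i alpha i <= L)%N -> Dmulti alpha (g \- surrogate) p = 0.
Proof.
move=> alphaL.
have -> : g \- surrogate = trig_comb (fun e : grid => L < #|supp e|)%N
    (fun e => g (p + grid_node e)) (fun e j => kernel_coef (grid_node e 0 j) (p 0 j)).
  apply/funext => theta; rewrite trig_combE /= sub_surrogate.
  by apply: eq_bigr => e _; rewrite Ktilde_prod_trig.
rewrite Dmulti_trig_comb trig_combE big1 // => e Le.
have alpha_supp_lt := leq_ltn_trans (leq_trans (card_nonzero_le_sum alpha) alphaL) Le.
have [j ej alpha_j] := card_lt_exists_notin alpha_supp_lt.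
rewrite /prod_trig (bigD1 j) //= deriv_multi_id; last by apply/eqP; move: alpha_j; rewrite inE negbK.
rewrite (trig1_kernel_coef (grid_node e 0 j)) subrr subr0 mxE kernel1_node_angle ?mul0r ?mulr0 //.
by rewrite inE in ej.
Qed.

End Surrogate.

Theorem theorem3 (R : realType) (n m : nat)
  (M : 'M[R[i]]_(2 ^ n)) (C : 'I_m.+1 -> 'M[R[i]]_(2 ^ n))
  (G : 'I_m -> 'M[R[i]]_(2 ^ n)) :
  hermitian_mx M ->
  (forall k, unitary_mx (C k)) ->
  (forall j, hermitian_mx (G j)) ->
  (forall j (a : R[i]), eigenvalue (G j) a <-> (a = 1 \/ a = -1)) ->
  forall (p : 'rV[R]_m) (L : nat), (0 < L)%N -> (L <= m)%N ->
  forall (D : nat) (q : 'I_D -> 'rV[R]_m),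
  injective q ->
  (forall j, grid_pt L (q j)) ->
  (forall v, grid_pt L v -> exists j, q j = v) ->
  let f := expval M C G in
  let ft := fun theta : 'rV[R]_m =>
              \sum_(j < D) f (p + q j) * Ktilde (q j) (theta - p) in
  [/\ D = (\sum_(k < L.+1) 2 ^ k * binomial m k)%N,
      (forall vt : 'rV[R]_m, (nnz vt <= L)%N -> ft (p + vt) = f (p + vt)) &
      (forall alpha : 'I_m -> nat, (\sum_(i < m) alpha i <= L)%N ->
         Dmulti alpha (f \- ft) p = 0)].
Proof.
(* Neither are 0 < L and L <= m. *)
move=> _ _ _ _ p L _ _ D q q_inj q_grid q_onto f ft.
have f_trig : coordwise_trig_deg1 f := expval_coordwise_trig_deg1 C G M.
have -> : ft = surrogate L p f.
  apply/funext => theta.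
  exact: (sum_grid_enum q_inj q_grid q_onto (fun v => f (p + v) * Ktilde v (theta - p))).
split.
- exact: card_grid_enum q_inj q_grid q_onto.
- by move=> vt vtL; rewrite surrogate_sparse.
- by move=> alpha alphaL; rewrite Dmulti_sub_surrogate.
Qed.
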